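(* Let $R$ be a commutative ring with nonzero identity, $\delta$ an expansion of ideals of $R$, and $I,J,K$ proper ideals of $R$ with $J\subseteq K\subseteq I$. If $I$ is a $\delta$-$n$-ideal of $R$ and $\delta(J)=\delta(I)$, then $K$ is a $\delta$-$n$-ideal of $R$.
   Context: An expansion of ideals of a ring $R$ is a map $\delta$ from the set of ideals of $R$ to itself such that $I\subseteq\delta(I)$ for every ideal $I$, and $\delta(I)\subseteq\delta(J)$ whenever $I\subseteq J$. $\sqrt{0}$ denotes the nilradical of $R$. Given an expansion $\delta$, a proper ideal $I$ of $R$ is a $\delta$-$n$-ideal if whenever $a,b\in R$ with $ab\in I$ and $a\notin\sqrt{0}$, then $b\in\delta(I)$. *)

From mathcomp Require Export all_boot all_order all_algebra.
Set Implicit Arguments. Unset Strict Implicit. Unset Printing Implicit Defensive.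
Import GRing.Theory.
Local Open Scope ring_scope.

Definition is_idl (R : comNzRingType) (I : R -> Prop) : Prop :=
  I 0 /\ (forall x y, I x -> I y -> I (x + y)) /\
  (forall r x, I x -> I (r * x)).

Definition proper_idl (R : comNzRingType) (I : R -> Prop) : Prop :=
  is_idl I /\ ~ I 1.

Definition subset_of (R : Type) (I J : R -> Prop) : Prop := forall x, I x -> J x.

Definition nilradical (R : comNzRingType) : R -> Prop :=
  fun a => exists n : nat, a ^+ n = 0.

(* An expansion of ideals: a map delta from ideals to ideals with
   I ⊆ delta I and monotone.  delta is a function on subsets; only its
   values on ideals matter. *)
Definition expansion (R : comNzRingType) (delta : (R -> Prop) -> (R -> Prop)) : Prop :=
  (forall I, is_idl I -> is_idl (delta I)) /\
  (forall I, is_idl I -> subset_of I (delta I)) /\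
  (forall I J, is_idl I -> is_idl J -> subset_of I J ->
     subset_of (delta I) (delta J)).

Definition delta_n_ideal (R : comNzRingType) (delta : (R -> Prop) -> (R -> Prop))
  (I : R -> Prop) : Prop :=
  proper_idl I /\
  (forall a b : R, I (a * b) -> ~ nilradical a -> delta I b).


Lemma delta_n_ideal_sub {R : comNzRingType}
    {delta : (R -> Prop) -> (R -> Prop)} {I K : R -> Prop} :
  proper_idl K -> subset_of K I -> subset_of (delta I) (delta K) ->
  delta_n_ideal delta I -> delta_n_ideal delta K.
Proof.
move=> propK sKI sdIK [_ nI]; split=> // a b Kab nil_a.
exact/sdIK/(nI a b (sKI _ Kab) nil_a).
Qed.

Lemma expansion_subset {R : comNzRingType}
    {delta : (R -> Prop) -> (R -> Prop)} {J K : R -> Prop} :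
  expansion delta -> is_idl J -> is_idl K -> subset_of J K ->
  subset_of (delta J) (delta K).
Proof. by case=> _ [_ mono]; apply: mono. Qed.

Theorem proposition2p18 (R : comNzRingType)
  (delta : (R -> Prop) -> (R -> Prop)) (I J K : R -> Prop) :
  expansion delta ->
  proper_idl I -> proper_idl J -> proper_idl K ->
  subset_of J K -> subset_of K I ->
  delta_n_ideal delta I ->
  delta J = delta I ->
  delta_n_ideal delta K.
Proof.
move=> exp_delta _ [idJ _] propK sJK sKI nI dJI.
apply: (delta_n_ideal_sub propK sKI _ nI).
by rewrite -dJI; apply: expansion_subset sJK => //; case: propK.
Qed.
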